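(* For every positive integer $n$ and every complex number $q$ with $0<|q|<1$, \[ \sum_{k=1}^{n}[4k+1]\frac{(q;q^2)_k^3}{(q^2;q^2)_k^3}\frac{(q^{-2n};q^2)_k}{(q^{3+2n};q^2)_k}\,q^{(1+2n)k}\sum_{i=1}^{2k}(-1)^i\frac{q^i}{[i]^2} =\frac{(q,q^3;q^2)_{n}}{(q^2;q^2)_{n}^2}\sum_{j=1}^n\frac{q^{2j}}{[2j]^2}. \]
   Context: For complex $x,q$ and an integer $n\ge 0$, $(x;q)_n=\prod_{i=0}^{n-1}(1-xq^i)$, and $(x_1,\dots,x_r;q)_n=(x_1;q)_n\cdots(x_r;q)_n$. The $q$-integer is $[n]=1+q+\cdots+q^{n-1}=(1-q^n)/(1-q)$. *)

From HB Require Import structures.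
From mathcomp Require Import all_boot all_order all_algebra.
From mathcomp Require Export complex.
Set Implicit Arguments. Unset Strict Implicit. Unset Printing Implicit Defensive.
Import Order.TTheory GRing.Theory Num.Theory.
Local Open Scope ring_scope.

Definition qpoch {F : comRingType} (x q : F) (n : nat) : F :=
  \prod_(i < n) (1 - x * q ^+ i).

Definition qint {F : comRingType} (q : F) (n : nat) : F :=
  \sum_(i < n) q ^+ i.

From HB Require Import structures.
From mathcomp Require Import all_boot all_order all_algebra.
From mathcomp Require Import complex.
From mathcomp Require Import ring zify.
Set Implicit Arguments. Unset Strict Implicit. Unset Printing Implicit Defensive.
Import Order.TTheory GRing.Theory Num.Theory.
Local Open Scope ring_scope.

(* WZ method.  Divide the summand by the prefactor of the right-hand side to
   get weights tau(n,k), supported on 0 <= k <= n.  They form a WZ pair with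
   certificate R(n,k) tau(n+1,k), so sum_k tau(n,k) = tau(0,0) = 1.  With H_k
   the alternating inner sum and J_n the sum on the right, the weights
   tau(n,k) (H_k - J_n) admit the certificate
   tau(n+1,k) (S(n,k) + R(n,k) (H_k - J_(n+1))), so their sum is independent
   of n, hence 0; that is, sum_k tau(n,k) H_k = J_n.  Both certificate
   identities are identities of rational functions in q, q^(2n) and q^(2k)
   once the ratios tau(n,k+1)/tau(n,k) and tau(n+1,k)/tau(n,k) are known. *)

Section QPochhammer.
Context {F : comNzRingType}.

Lemma qpoch0 (x p : F) : qpoch x p 0 = 1.
Proof. by rewrite /qpoch big_ord0. Qed.

Lemma qpochS (x p : F) k : qpoch x p k.+1 = qpoch x p k * (1 - x * p ^+ k).
Proof. by rewrite /qpoch big_ord_recr. Qed.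

Lemma qpoch_shift (x p : F) k :
  (1 - x) * qpoch (x * p) p k = qpoch x p k * (1 - x * p ^+ k).
Proof.
elim: k => [|k IHk]; first by rewrite !qpoch0 expr0; ring.
by rewrite !qpochS mulrA IHk exprS; ring.
Qed.

Lemma qint_mul1B (q : F) m : qint q m * (1 - q) = 1 - q ^+ m.
Proof.
elim: m => [|m IHm]; first by rewrite /qint big_ord0 mul0r expr0 subrr.
by rewrite /qint big_ord_recr /= mulrDl -/(qint q m) IHm exprS; ring.
Qed.

End QPochhammer.

Lemma wz_sum_const (V : zmodType) (f g : nat -> nat -> V) (n : nat) :
    (forall m, f m m.+1 = 0) ->
    (forall m k, f m.+1 k - f m k = g m k.+1 - g m k) ->
    (forall m, g m 0 = 0) -> (forall m, g m m.+2 = 0) ->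
  \sum_(0 <= k < n.+1) f n k = f 0%N 0%N.
Proof.
move=> f_end fgE g0 g_end; elim: n => [|n IHn]; first by rewrite big_nat1.
apply/eqP; rewrite -IHn -subr_eq0.
have -> : \sum_(0 <= k < n.+1) f n k = \sum_(0 <= k < n.+2) f n k.
  by rewrite [RHS]big_nat_recr //= f_end addr0.
by rewrite -sumrB (telescope_sumr_eq (g n)) ?g_end ?g0 ?subr0.
Qed.

Lemma oneBX_neq0 (R : numDomainType) (x : R) :
  `|x| < 1 -> forall m, (0 < m)%N -> 1 - x ^+ m != 0.
Proof.
move=> x_lt1 m m_gt0; rewrite subr_eq0 eq_sym; apply/negP => /eqP xm1.
have : `|x| ^+ m < 1 by rewrite expr_lt1.
by rewrite -normrX xm1 normr1 ltxx.
Qed.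

Lemma oneBV_neq0 (F : fieldType) (x : F) : 1 - x != 0 -> 1 - x^-1 != 0.
Proof. by rewrite !subr_eq0 !(eq_sym 1) invr_eq1. Qed.

Section WZProof.
Variables (F : fieldType) (q : F).
Hypothesis q_neq0 : q != 0.
Hypothesis oneBqX_neq0 : forall m, (0 < m)%N -> 1 - q ^+ m != 0.

Definition q2 m := q ^+ (2 * m).

Definition term n k := qint q (4 * k + 1)
  * (qpoch q (q ^+ 2) k) ^+ 3 / (qpoch (q ^+ 2) (q ^+ 2) k) ^+ 3
  * (qpoch ((q ^+ (2 * n))^-1) (q ^+ 2) k) / (qpoch (q ^+ (3 + 2 * n)) (q ^+ 2) k)
  * q ^+ ((1 + 2 * n) * k).

Definition prefactor n :=
  qpoch q (q ^+ 2) n * qpoch (q ^+ 3) (q ^+ 2) n / (qpoch (q ^+ 2) (q ^+ 2) n) ^+ 2.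

Definition alt_sum k :=
  \sum_(1 <= i < (2 * k).+1) ((-1) ^+ i * q ^+ i / (qint q i) ^+ 2).

Definition even_sum n := \sum_(1 <= j < n.+1) (q ^+ (2 * j) / (qint q (2 * j)) ^+ 2).

Ltac solve_oneBqX := rewrite /q2;
  repeat first [rewrite -exprM | rewrite -exprS | rewrite -exprD];
  apply: oneBqX_neq0; lia.

Lemma q20 : q2 0 = 1.
Proof. by rewrite /q2 muln0 expr0. Qed.

Lemma q2S m : q2 m.+1 = q ^+ 2 * q2 m.
Proof. by rewrite /q2 -exprD; congr (_ ^+ _); lia. Qed.

Lemma q2_neq0 m : q2 m != 0.
Proof. by rewrite /q2 expf_neq0. Qed.

Lemma oneBq_neq0 : 1 - q != 0.
Proof. by rewrite -[q]expr1 oneBqX_neq0. Qed.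

Lemma qintE m : qint q m = (1 - q ^+ m) / (1 - q).
Proof. by rewrite -qint_mul1B mulfK // oneBq_neq0. Qed.

Lemma qpoch_neq0 a k : (0 < a)%N -> qpoch (q ^+ a) (q ^+ 2) k != 0.
Proof.
move=> a_gt0; apply/prodf_neq0 => i _.
by rewrite -exprM -exprD oneBqX_neq0 //; lia.
Qed.

Lemma prefactor_neq0 n : prefactor n != 0.
Proof.
rewrite /prefactor !mulf_neq0 ?invr_eq0 ?expf_neq0 ?qpoch_neq0 //.
by rewrite -[q in qpoch q]expr1 qpoch_neq0.
Qed.

Ltac solve_neq0 := first [ exact: q_neq0 | exact: q2_neq0 | exact: oneBq_neq0
  | exact: prefactor_neq0 | by rewrite /q2 -?exprD qpoch_neq0
  | by apply: oneBV_neq0; solve_oneBqX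
  | by rewrite -oppr_eq0 opprB; solve_oneBqX | solve_oneBqX ].

Ltac field_neq0 := field; repeat (apply/andP; split); solve_neq0.

Lemma termSk n k : term n k.+1 = term n k *
  ((1 - q ^+ 5 * q2 k ^+ 2) / (1 - q * q2 k ^+ 2)
   * ((1 - q * q2 k) / (1 - q ^+ 2 * q2 k)) ^+ 3
   * (1 - q2 k / q2 n) / (1 - q ^+ 3 * q2 n * q2 k) * (q * q2 n)).
Proof.
have e1 : q ^+ (4 * k.+1 + 1) = q ^+ 5 * q2 k ^+ 2.
  by rewrite /q2 -exprM -exprD; congr (_ ^+ _); lia.
have e2 : q ^+ (4 * k + 1) = q * q2 k ^+ 2.
  by rewrite /q2 -exprM -exprS; congr (_ ^+ _); lia.
have e3 : q ^+ ((1 + 2 * n) * k.+1) = q ^+ ((1 + 2 * n) * k) * (q * q2 n).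
  by rewrite /q2 -exprS -exprD; congr (_ ^+ _); lia.
have e4 : (q ^+ 2) ^+ k = q2 k by rewrite -exprM.
have e5 : q ^+ (3 + 2 * n) = q ^+ 3 * q2 n by rewrite exprD.
rewrite /term !qpochS !qintE e1 e2 e3 e4 e5 -/(q2 n).
field_neq0.
Qed.

(* Stated downwards: [term n k] vanishes for [k > n] while [term n.+1 k] need
   not, so no upward ratio exists. *)
Lemma termSn n k : term n k = term n.+1 k *
  ((1 - q2 k / q2 n.+1) / (1 - (q2 n.+1)^-1)
   * (1 - q ^+ 3 * q2 n * q2 k) / (1 - q ^+ 3 * q2 n) / q2 k).
Proof.
have e2 : q ^+ (3 + 2 * n.+1) = q ^+ 3 * q2 n * q ^+ 2.
  by rewrite /q2 -!exprD; congr (_ ^+ _); lia.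
have e3 : q ^+ ((1 + 2 * n.+1) * k) = q ^+ ((1 + 2 * n) * k) * q2 k.
  by rewrite /q2 -exprD; congr (_ ^+ _); lia.
have e4 : (q ^+ 2) ^+ k = q2 k by rewrite -exprM.
have e5 : q ^+ (3 + 2 * n) = q ^+ 3 * q2 n by rewrite exprD.
have e6 : (q2 n.+1)^-1 * q ^+ 2 = (q2 n)^-1.
  by rewrite q2S invfM mulrAC mulVf ?mul1r // expf_neq0.
have Vq2_neq0 : 1 - (q2 n.+1)^-1 != 0 by solve_neq0.
have shiftV : qpoch (q2 n)^-1 (q ^+ 2) k = qpoch (q2 n.+1)^-1 (q ^+ 2) k
    * (1 - (q2 n.+1)^-1 * q2 k) / (1 - (q2 n.+1)^-1).
  by rewrite -e4 -qpoch_shift e6 mulrC mulKf.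
have shift3 : qpoch (q ^+ 3 * q2 n) (q ^+ 2) k = (1 - q ^+ 3 * q2 n)
    * qpoch (q ^+ 3 * q2 n * q ^+ 2) (q ^+ 2) k / (1 - q ^+ 3 * q2 n * q2 k).
  by rewrite qpoch_shift e4 mulfK //; solve_oneBqX.
rewrite /term -/(q2 n.+1) e2 e3 e5 -/(q2 n) shiftV shift3.
field_neq0.
Qed.

Lemma prefactorS n : prefactor n.+1 =
  prefactor n * ((1 - q * q2 n) * (1 - q ^+ 3 * q2 n) / (1 - q ^+ 2 * q2 n) ^+ 2).
Proof.
have e : (q ^+ 2) ^+ n = q2 n by rewrite -exprM.
by rewrite /prefactor !qpochS e; field_neq0.
Qed.

Lemma alt_sum0 : alt_sum 0 = 0.
Proof. by rewrite /alt_sum big_geq. Qed.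

Lemma even_sum0 : even_sum 0 = 0.
Proof. by rewrite /even_sum big_geq. Qed.

Lemma alt_sumS k : alt_sum k.+1 = alt_sum k +
  (1 - q) ^+ 2 * (q ^+ 2 * q2 k / (1 - q ^+ 2 * q2 k) ^+ 2 - q * q2 k / (1 - q * q2 k) ^+ 2).
Proof.
rewrite /alt_sum (_ : (2 * k.+1).+1 = (2 * k).+3)%N; last lia.
rewrite big_nat_recr //= big_nat_recr //= !qintE -addrA.
have e1 : q ^+ (2 * k).+1 = q * q2 k by rewrite exprS.
have e2 : q ^+ (2 * k).+2 = q ^+ 2 * q2 k by rewrite -q2S; congr (_ ^+ _); lia.
have sgn : (-1) ^+ (2 * k) = 1 :> F by rewrite exprM sqrrN !expr1n.
rewrite e1 e2 !(exprS (-1)) sgn.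
by congr (_ + _); field_neq0.
Qed.

Lemma even_sumS n : even_sum n.+1 =
  even_sum n + (1 - q) ^+ 2 * (q ^+ 2 * q2 n / (1 - q ^+ 2 * q2 n) ^+ 2).
Proof.
rewrite /even_sum big_nat_recr //= qintE -/(q2 n.+1) q2S.
congr (_ + _); field_neq0.
Qed.

Lemma term_vanish n : term n n.+1 = 0.
Proof.
by rewrite /term (qpochS (q ^+ (2 * n))^-1) -exprM mulVf ?expf_neq0 // subrr !(mulr0, mul0r).
Qed.

Definition weight n k := term n k / prefactor n.

Definition harm_weight n k := weight n k * (alt_sum k - even_sum n).

Definition cert_ratio n k := - (q ^+ 2 * q2 n * (1 - q2 k) ^+ 3 * (1 - q ^+ 3 * q2 n * q2 k))
  / ((1 - q ^+ 2 * q2 n) ^+ 3 * q2 k * (1 - q * q2 k ^+ 2)).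

Definition cert_harm_ratio n k :=
  (1 - q) ^+ 2 * (q ^+ 2 * q2 n * (1 - q2 k) * (1 - q ^+ 3 * q2 n * q2 k)
     / ((1 - q ^+ 2 * q2 n) ^+ 3 * (1 - q * q2 k ^+ 2))
   + cert_ratio n k * (q ^+ 2 * q2 n / (1 - q ^+ 2 * q2 n) ^+ 2)).

Definition cert n k := cert_ratio n k * weight n.+1 k.

Definition cert_harm n k :=
  weight n.+1 k * (cert_harm_ratio n k + cert_ratio n k * (alt_sum k - even_sum n.+1)).

Lemma weight_wz n k : weight n.+1 k - weight n k = cert n k.+1 - cert n k.
Proof.
rewrite /cert /weight /cert_ratio (termSk n.+1 k) (termSn n k) prefactorS !q2S.
field_neq0.
Qed.

Lemma harm_weight_wz n k :
  harm_weight n.+1 k - harm_weight n k = cert_harm n k.+1 - cert_harm n k.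
Proof.
rewrite /harm_weight /cert_harm /cert_harm_ratio /weight /cert_ratio.
rewrite (termSk n.+1 k) (termSn n k) prefactorS alt_sumS !even_sumS !q2S.
field_neq0.
Qed.

Lemma cert_ratio0 n : cert_ratio n 0 = 0.
Proof. by rewrite /cert_ratio q20 subrr; ring. Qed.

Lemma weight00 : weight 0 0 = 1.
Proof.
rewrite /weight /term /prefactor !qpoch0 /qint big_ord1 !expr0 !expr1n.
by rewrite !(mulr1, invr1, mul1r, divr1).
Qed.

Lemma weight_vanish n : weight n n.+1 = 0.
Proof. by rewrite /weight term_vanish mul0r. Qed.

Lemma sum_weight n : \sum_(0 <= k < n.+1) weight n k = 1.
Proof.
rewrite -weight00; apply: (@wz_sum_const _ weight cert) => [m|m k|m|m].
- exact: weight_vanish.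
- exact: weight_wz.
- by rewrite /cert cert_ratio0 mul0r.
- by rewrite /cert weight_vanish mulr0.
Qed.

Lemma sum_harm_weight n : \sum_(0 <= k < n.+1) harm_weight n k = 0.
Proof.
have harm_weight00 : harm_weight 0 0 = 0.
  by rewrite /harm_weight alt_sum0 even_sum0 subrr mulr0.
rewrite -[RHS]harm_weight00; apply: (@wz_sum_const _ _ cert_harm) => [m|m k|m|m].
- by rewrite /harm_weight weight_vanish mul0r.
- exact: harm_weight_wz.
- by rewrite /cert_harm /cert_harm_ratio cert_ratio0 q20 subrr; ring.
- by rewrite /cert_harm weight_vanish mul0r.
Qed.

Lemma sum_term_alt_sum n :
  \sum_(1 <= k < n.+1) (term n k * alt_sum k) = prefactor n * even_sum n.
Proof.
have weighted : \sum_(0 <= k < n.+1) weight n k * alt_sum k = even_sum n.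
  have := sum_harm_weight n; rewrite /harm_weight; under eq_bigr do rewrite mulrBr.
  by rewrite sumrB -mulr_suml sum_weight mul1r => /eqP; rewrite subr_eq0 => /eqP.
rewrite -weighted mulr_sumr (big_ltn (m := 0%N)) // alt_sum0 !mulr0 add0r.
by apply: eq_bigr => k _; rewrite /weight; field_neq0.
Qed.

End WZProof.

Local Open Scope complex_scope.

Theorem mainTheorem10 (R : rcfType) (n : nat) (q : R[i]) :
  (0 < n)%N -> 0 < `|q| -> `|q| < 1 ->
  \sum_(1 <= k < n.+1)
     (qint q (4 * k + 1)
      * (qpoch q (q ^+ 2) k) ^+ 3 / (qpoch (q ^+ 2) (q ^+ 2) k) ^+ 3
      * (qpoch ((q ^+ (2 * n))^-1) (q ^+ 2) k) / (qpoch (q ^+ (3 + 2 * n)) (q ^+ 2) k)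
      * q ^+ ((1 + 2 * n) * k)
      * \sum_(1 <= i < (2 * k).+1) ((-1) ^+ i * q ^+ i / (qint q i) ^+ 2))
  = qpoch q (q ^+ 2) n * qpoch (q ^+ 3) (q ^+ 2) n / (qpoch (q ^+ 2) (q ^+ 2) n) ^+ 2
    * \sum_(1 <= j < n.+1) (q ^+ (2 * j) / (qint q (2 * j)) ^+ 2).
Proof.
(* The identity holds for n = 0 as well. *)
move=> _ q_gt0 q_lt1.
have q_neq0 : q != 0 by rewrite -normr_gt0.
exact: (sum_term_alt_sum q_neq0 (oneBX_neq0 q_lt1) n).
Qed.
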